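(* Let $\mathbb F\in\{\mathbb R,\mathbb C\}$. Suppose the Lie algebra $\mathfrak g$ is contracted to the Lie algebra $\hat{\mathfrak g}$ by a contraction matrix $\hat U_\varepsilon$ whose entries are polynomials in $\varepsilon$, and $\hat{\mathfrak g}$ is contracted to the Lie algebra $\tilde{\mathfrak g}$ by a contraction matrix $\tilde U_\varepsilon$ whose entries are polynomials in $\varepsilon$ (both nonsingular for $\varepsilon\in(0,1]$). Then $\mathfrak g$ is contracted to $\tilde{\mathfrak g}$ by a contraction matrix whose entries are polynomials in the contraction parameter.
   Context: All algebras are structures on the same $n$-dimensional space, given by structure constants in a fixed basis. A continuous $U:(0,1]\to GL_n(\mathbb F)$ contracts the algebra with structure constants $c^k_{ij}$ to the algebra with structure constants $c'^{k'}_{i'j'}$ if $\lim_{\varepsilon\to0^+}(U_\varepsilon)^i_{i'}(U_\varepsilon)^j_{j'}(U^{-1}_\varepsilon)^{k'}_kc^k_{ij}=c'^{k'}_{i'j'}$ for all indices (summation over repeated indices). *)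

From HB Require Import structures.
From mathcomp Require Import all_boot all_order all_algebra.
From mathcomp Require Import complex.
From mathcomp Require Import reals.
Set Implicit Arguments. Unset Strict Implicit. Unset Printing Implicit Defensive.
Import Order.TTheory GRing.Theory Num.Theory.
Local Open Scope ring_scope.

(* Structure constants c i j k = c^k_{ij} of an n-dimensional algebra. *)
Definition sconst (F : Type) (n : nat) := 'I_n -> 'I_n -> 'I_n -> F.

Definition is_lie (F : numFieldType) (n : nat) (c : sconst F n) : Prop :=
  (forall i j k, c i j k = - c j i k) /\
  (forall i j k m,
     \sum_(l < n) (c i j l * c l k m + c j k l * c l i m + c k i l * c l j m) = 0).

Definition transform (F : numFieldType) (n : nat) (U : 'M[F]_n) (c : sconst F n)
  : sconst F n :=
  fun i' j' k' => \sum_(i < n) \sum_(j < n) \sum_(k < n)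
     U i i' * U j j' * invmx U k' k * c i j k.

Definition contracts_by (F : numFieldType) (n : nat) (U : F -> 'M[F]_n)
  (c c' : sconst F n) : Prop :=
  [/\ (forall eps : F, 0 < eps <= 1 -> U eps \in unitmx),
      (forall eps0 : F, 0 < eps0 <= 1 -> forall e : F, 0 < e ->
         exists2 d : F, 0 < d & forall eps : F, 0 < eps <= 1 -> `|eps - eps0| < d ->
           forall a b, `|U eps a b - U eps0 a b| < e) &
      (forall e : F, 0 < e -> exists2 d : F, 0 < d &
         forall eps : F, 0 < eps < d -> 0 < eps <= 1 ->
           forall i' j' k', `|transform (U eps) c i' j' k' - c' i' j' k'| < e)].

Definition poly_mx_eval (F : numFieldType) (n : nat) (P : 'M[{poly F}]_n) (eps : F)
  : 'M[F]_n := map_mx (fun p => p.[eps]) P.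

Definition poly_contracts (F : numFieldType) (n : nat) (c c' : sconst F n) : Prop :=
  exists P : 'M[{poly F}]_n, contracts_by (poly_mx_eval P) c c'.

Definition poly_contraction_transitive (F : numFieldType) : Prop :=
  forall (n : nat) (g gh gt : sconst F n),
    is_lie g -> is_lie gh -> is_lie gt ->
    poly_contracts g gh -> poly_contracts gh gt -> poly_contracts g gt.

From HB Require Import structures.
From mathcomp Require Import all_boot all_order all_algebra.
From mathcomp Require Import ring.
From mathcomp Require Import complex.
From mathcomp Require Import reals.
Set Implicit Arguments. Unset Strict Implicit. Unset Printing Implicit Defensive.
Import Order.TTheory GRing.Theory Num.Theory.
Local Open Scope ring_scope.

(** Take the contraction matrix [U(eps) = Uh(eps^q) Ut(eps)].  The
    [U(eps)]-transform of [g] is the [Ut(eps)]-transform of the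
    [Uh(eps^q)]-transform of [g], i.e. the [Ut(eps)]-transform of [gh] plus
    that of the error [E(eps^q)], where [E(y)] is the [Uh(y)]-transform of
    [g] minus [gh].  By Cramer's rule the entries of [E(y)] are rational
    functions of [y] tending to 0, hence [O(y)].  The entries of [Ut(eps)]
    are bounded and those of its inverse are [O(eps^-p)], where [p] is the
    order of vanishing of [det Ut] at 0.  With [q = p + 1] the transported
    error is [O(eps)], so the limit is that of the [Ut(eps)]-transform of
    [gh], namely [gt]. *)

Section NearZero.
Variable F : numFieldType.
Implicit Types (P Q : F -> Prop) (d e x : F).

Definition near0 P := exists2 d, 0 < d & forall x, 0 < x < d -> P x.

Lemma near0_lt d : 0 < d -> near0 (fun x => x < d).
Proof. by move=> d0; exists d => // x /andP[]. Qed.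

Lemma near0_mono P Q : (forall x, 0 < x -> P x -> Q x) -> near0 P -> near0 Q.
Proof.
move=> PQ [d d0 HP]; exists d => // x xd.
by apply: PQ (HP x xd); case/andP: xd.
Qed.

Lemma near0_and P Q : near0 P -> near0 Q -> near0 (fun x => P x /\ Q x).
Proof.
move=> [d1 d10 HP] [d2 d20 HQ].
have [d12|d21] := real_leP (gtr0_real d10) (gtr0_real d20).
  exists d1 => // x /andP[x0 xd]; split; first by apply: HP; rewrite x0.
  by apply: HQ; rewrite x0 (lt_le_trans xd d12).
exists d2 => // x /andP[x0 xd]; split; last by apply: HQ; rewrite x0.
by apply: HP; rewrite x0 (lt_trans xd d21).
Qed.

Lemma near0_ex P : near0 P -> exists2 x, 0 < x & P x.
Proof.
move=> [d d0 HP]; have [m0 md] := midf_lt d0.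
by exists ((0 + d) / 2) => //; apply: HP; rewrite m0.
Qed.

Lemma near0_forall (T : finType) (P : T -> F -> Prop) :
  (forall t, near0 (P t)) -> near0 (fun x => forall t, P t x).
Proof.
move=> HP; suff : near0 (fun x => forall t, t \in enum T -> P t x).
  by apply: near0_mono => x _ H t; apply: H; rewrite mem_enum.
elim: (enum T) => [|t s IH]; first by exists 1.
apply: near0_mono (near0_and (HP t) IH) => x _ [Ht Hs] u.
by rewrite in_cons => /orP[/eqP -> | /Hs].
Qed.

Lemma near0_exprn P q : (0 < q)%N -> near0 P -> near0 (fun x => P (x ^+ q)).
Proof.
move=> q0 [d d0 HP].
apply: near0_mono (near0_and (near0_lt ltr01) (near0_lt d0)) => x x0 [x1 xd].
apply: HP; rewrite exprn_gt0 //=; apply: le_lt_trans xd.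
by rewrite -[leRHS]expr1 ler_wiXn2l ?(ltW x0) ?(ltW x1).
Qed.

Lemma near0_linear (K e : F) : 0 <= K -> 0 < e -> near0 (fun x => K * x < e).
Proof.
move=> K0 e0; have K1 : 0 < K + 1 by rewrite ltr_wpDl.
apply: near0_mono (near0_lt (divr_gt0 e0 K1)) => x x0 xd.
apply: le_lt_trans (_ : (K + 1) * x < e); first by rewrite ler_wpM2r ?(ltW x0) ?lerDl.
by rewrite mulrC -ltr_pdivlMr.
Qed.

Lemma uniform_bound_fin (T : finType) (P : T -> F -> Prop) :
  (forall t K K', K <= K' -> P t K -> P t K') ->
  (forall t, exists K, 0 <= K /\ P t K) -> exists K, 0 <= K /\ forall t, P t K.
Proof.
move=> mono HP.
suff [K [K0 HK]] : exists K, 0 <= K /\ forall t, t \in enum T -> P t K.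
  by exists K; split => // t; apply: HK; rewrite mem_enum.
elim: (enum T) => [|t s [K [K0 HK]]]; first by exists 0.
have [Kt [Kt0 HKt]] := HP t.
exists (K + Kt); split => [|u]; first by rewrite addr_ge0.
rewrite in_cons => /orP[/eqP -> | us].
  by apply: mono HKt; rewrite lerDr.
by apply: mono (HK u us); rewrite lerDl.
Qed.

End NearZero.

Section HornerNearZero.
Variable F : numFieldType.
Implicit Types (h p s : {poly F}) (x : F).

Lemma horner_bounded_lipschitz p : exists M, 0 <= M /\
  (forall x, `|x| <= 1 -> `|p.[x]| <= M) /\
  (forall x y, `|x| <= 1 -> `|y| <= 1 -> `|p.[x] - p.[y]| <= M * `|x - y|).
Proof.
elim/poly_ind: p => [|p c [M [M0 [HM HL]]]].
  by exists 0; split => //; split => *; rewrite !horner0 ?subr0 ?normr0 ?mul0r.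
exists (M + M + `|c|); split; first by rewrite !addr_ge0.
split => [x x1|x y x1 y1]; rewrite !hornerMXaddC.
  apply: le_trans (ler_normD _ _) _; rewrite normrM lerD2r.
  apply: le_trans (_ : M <= M + M); last by rewrite lerDl.
  by have := ler_pM (normr_ge0 _) (normr_ge0 x) (HM x x1) x1; rewrite mulr1.
have -> : p.[x] * x + c - (p.[y] * y + c) = (p.[x] - p.[y]) * x + p.[y] * (x - y).
  by ring.
apply: le_trans (ler_normD _ _) _; rewrite !normrM.
apply: le_trans (_ : M * `|x - y| + M * `|x - y| <= _); last first.
  by rewrite -mulrDl ler_wpM2r // lerDl.
apply: lerD; last by rewrite ler_wpM2r // HM.
by have := ler_pM (normr_ge0 _) (normr_ge0 x) (HL x y x1 y1) x1; rewrite mulr1.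
Qed.

Lemma horner_bounded_fin (T : finType) (p : T -> {poly F}) :
  exists M, 0 <= M /\ forall t x, `|x| <= 1 -> `|(p t).[x]| <= M.
Proof.
apply: uniform_bound_fin => [t M M' MM' H x x1 | t].
  exact: le_trans (H x x1) MM'.
by have [M [M0 [HM _]]] := horner_bounded_lipschitz (p t); exists M.
Qed.

Lemma horner_lipschitz_fin (T : finType) (p : T -> {poly F}) :
  exists M, 0 <= M /\ forall t x y, `|x| <= 1 -> `|y| <= 1 ->
    `|(p t).[x] - (p t).[y]| <= M * `|x - y|.
Proof.
apply: uniform_bound_fin => [t M M' MM' H x y x1 y1 | t].
  by apply: le_trans (H x y x1 y1) _; rewrite ler_wpM2r.
by have [M [M0 [_ HL]]] := horner_bounded_lipschitz (p t); exists M.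
Qed.

Lemma norm_half_dist (a b : F) : `|a - b| <= `|b| / 2 ->
  `|b| / 2 <= `|a| /\ `|a| <= `|b| * 2.
Proof.
move=> ab; split.
  have : `|b| - `|a| <= `|b| / 2 by rewrite (le_trans (lerB_dist b a)) // distrC.
  by rewrite {1}(splitr `|b|) -addrA gerDl subr_le0.
rewrite -(subrK b a); apply: le_trans (ler_normD _ _) _.
rewrite mulr_natr mulr2n lerD2r (le_trans ab) //.
by rewrite {2}(splitr `|b|) lerDl divr_ge0.
Qed.

Lemma horner_near0 h : h.[0] != 0 ->
  near0 (fun x => `|h.[0]| / 2 <= `|h.[x]| /\ `|h.[x]| <= `|h.[0]| * 2).
Proof.
move=> h0; have [M [M0 [_ HL]]] := horner_bounded_lipschitz h.
have h2 : 0 < `|h.[0]| / 2 by rewrite divr_gt0 ?normr_gt0.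
apply: near0_mono (near0_and (near0_lt ltr01) (near0_linear M0 h2)).
move=> x x0 [x1 Mx]; apply: norm_half_dist; apply: le_trans (ltW Mx).
have := HL x 0; rewrite normr0 subr0 ler01 (ger0_norm (ltW x0)).
by apply => //; exact: ltW.
Qed.

Lemma poly_factor_Xn h : h != 0 -> exists m s, s.[0] != 0 /\ h = s * 'X^m.
Proof.
move=> h0; have [m [s s0 ->]] := multiplicity_XsubC h 0.
exists m, s; split; last by rewrite subr0.
by move: s0; rewrite h0 rootE.
Qed.

Lemma norm_horner_mulXn s m x : 0 <= x -> `|(s * 'X^m).[x]| = `|s.[x]| * x ^+ m.
Proof. by move=> x0; rewrite hornerM hornerXn normrM normrX (ger0_norm x0). Qed.

Lemma horner_lower_bound h : h != 0 -> exists (p : nat) (c : F),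
  0 < c /\ near0 (fun x => c * x ^+ p <= `|h.[x]|).
Proof.
move=> /poly_factor_Xn [p [s [s0 ->]]].
exists p, (`|s.[0]| / 2); split; first by rewrite divr_gt0 ?normr_gt0.
apply: near0_mono (horner_near0 s0) => x x0 [sx _].
by rewrite norm_horner_mulXn ?ler_wpM2r ?exprn_ge0 ?(ltW x0).
Qed.

Lemma horner_ratio_bounded h s : h.[0] != 0 -> s.[0] != 0 -> exists a b : F,
  [/\ 0 < a, 0 <= b & near0 (fun x =>
        a <= `|h.[x] / s.[x]| /\ `|h.[x] / s.[x]| <= b)].
Proof.
move=> h0 s0; have h0p : 0 < `|h.[0]| by rewrite normr_gt0.
have s0p : 0 < `|s.[0]| by rewrite normr_gt0.
exists ((`|h.[0]| / 2) / (`|s.[0]| * 2)), ((`|h.[0]| * 2) / (`|s.[0]| / 2)).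
split; first by rewrite !(divr_gt0, mulr_gt0).
  by apply/ltW; rewrite !(divr_gt0, mulr_gt0).
apply: near0_mono (near0_and (horner_near0 h0) (horner_near0 s0)).
move=> x _ [[hl hu] [sl su]]; have sx : 0 < `|s.[x]| by apply: lt_le_trans sl; rewrite divr_gt0.
rewrite normrM normfV; split; apply: ler_pM => //;
  rewrite ?invr_ge0 ?divr_ge0 ?mulr_ge0 ?normr_ge0 //.
  by rewrite lef_pV2 // posrE mulr_gt0.
by rewrite lef_pV2 // posrE divr_gt0.
Qed.

Lemma ratfun_cvg0_linear f D : D != 0 ->
  (forall e, 0 < e -> near0 (fun x => `|f.[x] / D.[x]| < e)) ->
  exists C, 0 <= C /\ near0 (fun x => `|f.[x] / D.[x]| <= C * x).
Proof.
move=> D0 lim; have [->|f0] := eqVneq f 0.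
  by exists 0; split => //; exists 1 => // x _; rewrite horner0 mul0r normr0 mul0r.
have [m [h [h0 Ef]]] := poly_factor_Xn f0; have [r [s [s0 ED]]] := poly_factor_Xn D0.
have [a [b [a0 b0 ratio]]] := horner_ratio_bounded h0 s0.
have normE x : 0 < x -> `|f.[x] / D.[x]| = `|h.[x] / s.[x]| * (x ^+ m / x ^+ r).
  move=> x0; rewrite Ef ED normrM normfV !norm_horner_mulXn ?(ltW x0) //.
  by rewrite normrM normfV invfM mulrACA.
have near_ratio := near0_and (near0_lt ltr01) ratio.
case: (leqP m r) => mr.
  have [x x0 [[x1 [ax _]] small]] := near0_ex (near0_and near_ratio (lim a a0)).
  suff : a < a by rewrite ltxx.
  apply: le_lt_trans small; rewrite normE //; apply: le_trans ax _.
  rewrite ler_peMr // ler_pdivlMr ?exprn_gt0 // mul1r.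
  by rewrite ler_wiXn2l ?(ltW x0) ?(ltW x1).
exists b; split => //; apply: near0_mono near_ratio => x x0 [x1 [_ xb]].
rewrite normE // -expfB //; apply: ler_pM; rewrite ?normr_ge0 ?exprn_ge0 ?(ltW x0) //.
by rewrite -[leRHS]expr1 ler_wiXn2l ?subn_gt0 ?(ltW x0) ?(ltW x1).
Qed.

End HornerNearZero.

Section Transform.
Variables (F : numFieldType) (n : nat).
Local Notation I := 'I_n.
Implicit Types (U V : 'M[F]_n) (c : sconst F n).

Lemma sum3_pair (G : I -> I -> I -> F) :
  \sum_(a < n) \sum_(b < n) \sum_(d < n) G a b d = \sum_(t : I * I * I) G t.1.1 t.1.2 t.2.
Proof. by rewrite pair_big (pair_big _ _ (fun p d => G p.1 p.2 d)). Qed.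

Lemma exchange_sum3 (G : I -> I -> I -> I -> I -> I -> F) :
  \sum_(a < n) \sum_(b < n) \sum_(d < n) \sum_(i < n) \sum_(j < n) \sum_(k < n) G a b d i j k =
  \sum_(i < n) \sum_(j < n) \sum_(k < n) \sum_(a < n) \sum_(b < n) \sum_(d < n) G a b d i j k.
Proof.
rewrite sum3_pair [RHS]sum3_pair.
under eq_bigr do rewrite sum3_pair.
by rewrite exchange_big; apply: eq_bigr => u _; rewrite sum3_pair.
Qed.

Lemma mul_sum3 (x y z : I -> F) w :
  (\sum_(a < n) x a) * (\sum_(b < n) y b) * (\sum_(d < n) z d) * w =
  \sum_(a < n) \sum_(b < n) \sum_(d < n) x a * y b * z d * w.
Proof.
rewrite -!mulrA big_distrl; apply: eq_bigr => a _.
rewrite big_distrl big_distrr; apply: eq_bigr => b _.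
rewrite big_distrl big_distrr big_distrr; apply: eq_bigr => d _.
by rewrite /= !mulrA.
Qed.

Lemma invmxM U V : U \in unitmx -> V \in unitmx -> invmx (U *m V) = invmx V *m invmx U.
Proof.
move=> Uu Vu; have UVu : U *m V \in unitmx by rewrite unitmx_mul Uu Vu.
have E : (U *m V) *m (invmx V *m invmx U) = 1%:M.
  by rewrite mulmxA -(mulmxA U) mulmxV // mulmx1 mulmxV.
by rewrite -[RHS](mulKmx UVu) E mulmx1.
Qed.

Lemma transformM U V c i' j' k' : U \in unitmx -> V \in unitmx ->
  transform (U *m V) c i' j' k' = transform V (transform U c) i' j' k'.
Proof.
move=> Uu Vu; rewrite /transform invmxM //.
transitivity (\sum_(i < n) \sum_(j < n) \sum_(k < n) \sum_(a < n) \sum_(b < n) \sum_(c0 < n)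
  (V a i' * V b j' * invmx V k' c0) * (U i a * U j b * invmx U c0 k * c i j k)).
  apply: eq_bigr => i _; apply: eq_bigr => j _; apply: eq_bigr => k _.
  rewrite !mxE mul_sum3.
  by apply: eq_bigr => a _; apply: eq_bigr => b _; apply: eq_bigr => c0 _; ring.
rewrite -exchange_sum3; apply: eq_bigr => a _; apply: eq_bigr => b _; apply: eq_bigr => c0 _.
by rewrite !big_distrr; apply: eq_bigr => i _; rewrite !big_distrr; apply: eq_bigr => j _;
   rewrite !big_distrr.
Qed.

Lemma transformB U (c1 c2 : sconst F n) i' j' k' :
  transform U (fun i j k => c1 i j k - c2 i j k) i' j' k' =
  transform U c1 i' j' k' - transform U c2 i' j' k'.
Proof.
rewrite /transform -sumrB; apply: eq_bigr => i _.
rewrite -sumrB; apply: eq_bigr => j _.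
by rewrite -sumrB; apply: eq_bigr => k _; rewrite mulrBr.
Qed.

Lemma norm_transform_le U c (A B C : F) i' j' k' :
  (forall i j, `|U i j| <= A) -> (forall i j, `|invmx U i j| <= B) ->
  (forall i j k, `|c i j k| <= C) ->
  `|transform U c i' j' k'| <= (n ^ 3)%:R * (A * A * B * C).
Proof.
move=> UA UB cC.
have -> : (n ^ 3)%:R * (A * A * B * C) =
    \sum_(i < n) \sum_(j < n) \sum_(k < n) (A * A * B * C).
  by rewrite !sumr_const !card_ord -!mulrnA mulr_natl !expnS expn0 muln1 mulnA.
apply: le_trans (ler_norm_sum _ _ _) _; apply: ler_sum => i _.
apply: le_trans (ler_norm_sum _ _ _) _; apply: ler_sum => j _.
apply: le_trans (ler_norm_sum _ _ _) _; apply: ler_sum => k _.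
rewrite !normrM.
by do !apply: ler_pM; rewrite ?mulr_ge0 ?normr_ge0 ?UA ?UB ?cC.
Qed.

End Transform.

Section PolyMatrix.
Variables (F : numFieldType) (n : nat).
Implicit Types (P : 'M[{poly F}]_n) (x : F).

Lemma poly_mx_evalE P x : poly_mx_eval P x = map_mx (horner_eval x) P.
Proof. by apply/matrixP => i j; rewrite !mxE. Qed.

Lemma det_poly_mx_eval P x : \det (poly_mx_eval P x) = (\det P).[x].
Proof. by rewrite poly_mx_evalE det_map_mx. Qed.

Lemma unitmx_poly_mx_eval P x : (poly_mx_eval P x \in unitmx) = ((\det P).[x] != 0).
Proof. by rewrite unitmxE unitfE det_poly_mx_eval. Qed.

Lemma invmx_poly_mx_eval P x i j : (\det P).[x] != 0 ->
  invmx (poly_mx_eval P x) i j = (\adj P i j).[x] / (\det P).[x].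
Proof.
rewrite -unitmx_poly_mx_eval => unitP.
by rewrite /invmx unitP mxE poly_mx_evalE -map_mx_adj mxE det_poly_mx_eval mulrC.
Qed.

Lemma poly_mx_eval_bounded P :
  exists M, 0 <= M /\ forall x, `|x| <= 1 -> forall i j, `|poly_mx_eval P x i j| <= M.
Proof.
have [M [M0 HM]] := horner_bounded_fin (fun t : 'I_n * 'I_n => P t.1 t.2).
by exists M; split => // x x1 i j; rewrite mxE (HM (i, j)).
Qed.

Lemma poly_mx_eval_continuous P (eps0 : F) : 0 < eps0 <= 1 -> forall e : F, 0 < e ->
  exists2 d : F, 0 < d & forall eps : F, 0 < eps <= 1 -> `|eps - eps0| < d ->
    forall i j, `|poly_mx_eval P eps i j - poly_mx_eval P eps0 i j| < e.
Proof.
move=> /andP[e00 e01] e e0.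
have [K [K0 HK]] := horner_lipschitz_fin (fun t : 'I_n * 'I_n => P t.1 t.2).
have K1 : 0 < K + 1 by rewrite ltr_wpDl.
exists (e / (K + 1)); first by rewrite divr_gt0.
move=> eps /andP[ep0 ep1] close i j; rewrite !mxE.
apply: le_lt_trans (HK (i, j) eps eps0 _ _) _; try by rewrite ger0_norm // ltW.
apply: le_lt_trans (_ : (K + 1) * `|eps - eps0| < e); first by rewrite ler_wpM2r ?lerDl.
by rewrite mulrC -ltr_pdivlMr.
Qed.

Lemma invmx_poly_mx_eval_bound P : \det P != 0 -> exists (p : nat) (B : F), 0 <= B /\
  near0 (fun x => forall i j, `|invmx (poly_mx_eval P x) i j| <= B / x ^+ p).
Proof.
move=> detP; have [p [c [c0 low]]] := horner_lower_bound detP.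
have [M [M0 HM]] := horner_bounded_fin (fun t : 'I_n * 'I_n => \adj P t.1 t.2).
exists p, (M / c); split; first by rewrite divr_ge0 // ltW.
apply: near0_mono (near0_and (near0_lt ltr01) low) => x x0 [x1 lowx] i j.
have cx : 0 < c * x ^+ p by rewrite mulr_gt0 ?exprn_gt0.
have detx : 0 < `|(\det P).[x]| := lt_le_trans cx lowx.
rewrite invmx_poly_mx_eval -?normr_gt0 // normrM normfV -mulrA -invfM.
apply: ler_pM; rewrite ?normr_ge0 ?invr_ge0 //.
  by apply: (HM (i, j)); rewrite ger0_norm ltW.
by rewrite lef_pV2.
Qed.

Definition transform_num P (c : sconst F n) i' j' k' : {poly F} :=
  \sum_(i < n) \sum_(j < n) \sum_(k < n) P i i' * P j j' * \adj P k' k * (c i j k)%:P.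

Lemma transform_poly_mx_eval P c x i' j' k' : (\det P).[x] != 0 ->
  transform (poly_mx_eval P x) c i' j' k' = (transform_num P c i' j' k').[x] / (\det P).[x].
Proof.
move=> detx; rewrite /transform /transform_num horner_sum mulr_suml; apply: eq_bigr => i _.
rewrite horner_sum mulr_suml; apply: eq_bigr => j _.
rewrite horner_sum mulr_suml; apply: eq_bigr => k _.
rewrite [poly_mx_eval P x i i']mxE [poly_mx_eval P x j j']mxE.
by rewrite invmx_poly_mx_eval // !hornerM hornerC !mulrA mulrAC.
Qed.

Lemma contraction_det_neq0 P (c c' : sconst F n) :
  contracts_by (poly_mx_eval P) c c' -> \det P != 0.
Proof.
case=> unitP _ _; have := unitP 1; rewrite unitmx_poly_mx_eval ltr01 lexx => /(_ isT).
by apply: contraNneq => ->; rewrite horner0.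
Qed.

Lemma poly_contraction_rate P (c c' : sconst F n) : contracts_by (poly_mx_eval P) c c' ->
  exists C, 0 <= C /\ near0 (fun x =>
    forall i j k, `|transform (poly_mx_eval P x) c i j k - c' i j k| <= C * x).
Proof.
move=> cP; have detP := contraction_det_neq0 cP; case: cP => unitP _ limP.
pose err (t : 'I_n * 'I_n * 'I_n) :=
  transform_num P c t.1.1 t.1.2 t.2 - (c' t.1.1 t.1.2 t.2)%:P * \det P.
have errE t x : 0 < x <= 1 -> (err t).[x] / (\det P).[x] =
    transform (poly_mx_eval P x) c t.1.1 t.1.2 t.2 - c' t.1.1 t.1.2 t.2.
  move=> /unitP; rewrite unitmx_poly_mx_eval => detx.
  by rewrite transform_poly_mx_eval // hornerD hornerN hornerM hornerC mulrBl mulfK.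
have [C [C0 HC]] : exists C, 0 <= C /\
    forall t, near0 (fun x => `|(err t).[x] / (\det P).[x]| <= C * x).
  apply: uniform_bound_fin => [t C C' CC' | t].
    by apply: near0_mono => x x0 /le_trans; apply; rewrite ler_wpM2r // ltW.
  apply: ratfun_cvg0_linear => // e /limP lim.
  apply: near0_mono (near0_and (near0_lt ltr01) lim) => x x0 [x1 limx].
  have x01 : 0 < x <= 1 by rewrite x0 ltW.
  by rewrite errE //; apply: limx.
exists C; split => //.
apply: near0_mono (near0_and (near0_lt ltr01) (near0_forall HC)) => x x0 [x1 Cx] i j k.
by rewrite -(errE (i, j, k)) ?Cx // x0 ltW.
Qed.

End PolyMatrix.

Section Composition.
Variable F : numFieldType.

Definition poly_mx_comp_mul n (q : nat) (P Q : 'M[{poly F}]_n) : 'M[{poly F}]_n :=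
  map_mx (fun r => r \Po 'X^q) P *m Q.

Lemma poly_mx_eval_comp_mul n q (P Q : 'M[{poly F}]_n) x :
  poly_mx_eval (poly_mx_comp_mul q P Q) x = poly_mx_eval P (x ^+ q) *m poly_mx_eval Q x.
Proof.
apply/matrixP => i j; rewrite !mxE horner_sum; apply: eq_bigr => k _.
by rewrite !mxE hornerM horner_comp hornerXn.
Qed.

Theorem poly_contractions_compose : poly_contraction_transitive F.
Proof.
move=> n g gh gt _ _ _ [Ph cPh] [Pt cPt].
have [C [C0 rate]] := poly_contraction_rate cPh.
have [p [B [B0 invPt]]] := invmx_poly_mx_eval_bound (contraction_det_neq0 cPt).
have [A [A0 Pt_bd]] := poly_mx_eval_bounded Pt.
case: cPh cPt => unitPh _ _ [unitPt _ limPt].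
have x1q x : 0 < x <= 1 -> 0 < x ^+ p.+1 <= 1.
  by case/andP=> x0 x1; rewrite exprn_gt0 // exprn_ile1 // ltW.
exists (poly_mx_comp_mul p.+1 Ph Pt); split.
- by move=> x x01; rewrite poly_mx_eval_comp_mul unitmx_mul unitPh ?unitPt ?x1q.
- exact: poly_mx_eval_continuous.
move=> e e0; have e2 : 0 < e / 2 by rewrite divr_gt0.
pose K := (n ^ 3)%:R * (A * A * B * C).
have K0 : 0 <= K by rewrite mulr_ge0 // !mulr_ge0.
have lim2 : near0 (fun x => 0 < x <= 1 ->
  forall i j k, `|transform (poly_mx_eval Pt x) gh i j k - gt i j k| < e / 2) := limPt _ e2.
apply: near0_mono (near0_and lim2
  (near0_and (near0_and invPt (near0_exprn (ltn0Sn p) rate)) (near0_linear K0 e2))).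
move=> x x0 [limx [[invx ratex] smallx]] x01 i j k.
rewrite poly_mx_eval_comp_mul transformM ?unitPh ?unitPt ?x1q //.
apply: le_lt_trans (ler_distD (transform (poly_mx_eval Pt x) gh i j k) _ _) _.
rewrite -transformB [e]splitr addrC; apply: ltr_leD; first exact: limx.
apply: le_trans _ (ltW smallx); apply: le_trans (norm_transform_le i j k _ invx ratex) _.
  by move=> a b; apply: Pt_bd; rewrite ger0_norm ?(ltW x0) //; case/andP: x01.
suff -> : (n ^ 3)%:R * (A * A * (B / x ^+ p) * (C * x ^+ p.+1)) = K * x by [].
by rewrite /K exprS; field; rewrite expf_neq0 // gt_eqF.
Qed.

End Composition.

Theorem mainTheorem13 (R : realType) :
  poly_contraction_transitive R /\ poly_contraction_transitive R[i].
Proof. by split; apply: poly_contractions_compose. Qed.
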